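(* For every positive integer $n$, $$\operatorname{lcm}\left({n\brack 0}_q,{n\brack 1}_q,\ldots,{n\brack n}_q\right)=\prod_{\substack{1\le d\le n\\ d\nmid (n+1)}}\Phi_d(q)=\frac{\operatorname{lcm}([1]_q,\ldots,[n+1]_q)}{[n+1]_q}.$$ *)

From HB Require Import structures.
From mathcomp Require Import all_boot all_order all_algebra all_field.
Set Implicit Arguments. Unset Strict Implicit. Unset Printing Implicit Defensive.
Import Order.TTheory GRing.Theory Num.Theory.
Local Open Scope ring_scope.

Definition qint (k : nat) : {poly rat} := \sum_(i < k) 'X^i.

Definition qfact (n : nat) : {poly rat} := \prod_(1 <= i < n.+1) qint i.

Definition qbinom (n k : nat) : {poly rat} :=
  if (k <= n)%N then qfact n %/ (qfact k * qfact (n - k)) else 0.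

Definition lcmp (p q : {poly rat}) : {poly rat} :=
  let l := (p * q) %/ gcdp p q in (lead_coef l)^-1 *: l.

Definition lcm_seq (s : seq {poly rat}) : {poly rat} := foldr lcmp 1 s.

Definition PhiQ (d : nat) : {poly rat} := map_poly (intr : int -> rat) ('Phi_d).

From HB Require Import structures.
From mathcomp Require Import all_boot all_order all_algebra all_field zify.
Import Order.TTheory GRing.Theory Num.Theory.
Local Open Scope ring_scope.

(* Every polynomial occurring here is a product of cyclotomic polynomials
   Phi_d (d >= 2) in Q[q]:  [k]_q = prod_{1 < d | k} Phi_d, hence
   [m]_q! = prod_d Phi_d^(m %/ d), and the exponent of Phi_d in the Gaussian
   binomial [n brack k]_q is (n %/ d) - (k %/ d) - ((n-k) %/ d), i.e. the
   carry indicator  d <= k %% d + (n-k) %% d  (0 or 1).  Encoding products of Phi_d by exponent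
   functions, the q-integers, q-factorials and Gaussian binomials are
   computed, and two digit-arithmetic facts show that the carry never occurs
   when d | n+1 while for d <= n, d not dividing n+1, it occurs at k = d-1.
   Both lcms are then explicit products of Phi_d, and the theorem follows. *)

Lemma eqp_lcmp (p q : {poly rat}) : lcmp p q %= p * q %/ gcdp p q.
Proof.
rewrite /lcmp; set l := _ %/ _; have [->|l_neq0] := eqVneq l 0.
  by rewrite scaler0 eqpxx.
by rewrite eqp_scale // invr_eq0 lead_coef_eq0.
Qed.

Lemma dvdp_lcmpl (p q : {poly rat}) : p %| lcmp p q.
Proof.
by rewrite (eqp_dvdr _ (eqp_lcmp p q)) -divp_mulA ?dvdp_gcdr // dvdp_mulr.
Qed.

Lemma dvdp_lcmpr (p q : {poly rat}) : q %| lcmp p q.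
Proof.
rewrite (eqp_dvdr _ (eqp_lcmp p q)) mulrC.
by rewrite -divp_mulA ?dvdp_gcdl // dvdp_mulr.
Qed.

(* Universal property: with p = p' g and q = q' g (g the gcd, p' q' coprime),
   p q / g = p q' divides every common multiple r = u p, by Gauss' lemma. *)
Lemma lcmp_least (p q r : {poly rat}) : p %| r -> q %| r -> lcmp p q %| r.
Proof.
move=> p_dvd_r q_dvd_r; rewrite (eqp_dvdl _ (eqp_lcmp p q)).
have [p0|p_neq0] := eqVneq p 0; first by move: p_dvd_r; rewrite p0 mul0r div0p.
set g := gcdp p q; have g_neq0 : g != 0 by rewrite gcdp_eq0 negb_and p_neq0.
have coprime_pq' : coprimep (q %/ g) (p %/ g).
  by rewrite coprimep_sym coprimep_div_gcd // p_neq0.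
have Dp : p = p %/ g * g by apply/eqP; rewrite -dvdp_eq dvdp_gcdl.
have Dq : q = q %/ g * g by apply/eqP; rewrite -dvdp_eq dvdp_gcdr.
have /eqP Dr : r == r %/ p * p by rewrite -dvdp_eq.
rewrite -divp_mulA ?dvdp_gcdr // Dr mulrC dvdp_mul2r //.
move: q_dvd_r; rewrite {1}Dq {1}Dr {2}Dp mulrA dvdp_mul2r //.
by rewrite (Gauss_dvdpl _ coprime_pq').
Qed.

Lemma lcm_seq_dvd (s : seq {poly rat}) (x : {poly rat}) :
  x \in s -> x %| lcm_seq s.
Proof.
elim: s => //= a s IHs; rewrite inE => /orP[/eqP->|x_in_s].
  exact: dvdp_lcmpl.
exact: dvdp_trans (IHs x_in_s) (dvdp_lcmpr _ _).
Qed.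

Lemma lcm_seq_least (s : seq {poly rat}) (r : {poly rat}) :
  (forall x, x \in s -> x %| r) -> lcm_seq s %| r.
Proof.
elim: s => /= [_|a s IHs s_dvd_r]; first exact: dvd1p.
apply: lcmp_least; first by apply: s_dvd_r; rewrite inE eqxx.
by apply: IHs => x x_in_s; apply: s_dvd_r; rewrite inE x_in_s orbT.
Qed.

Lemma lcm_seq_monic_or0 (s : seq {poly rat}) :
  lcm_seq s = 0 \/ lcm_seq s \is monic.
Proof.
case: s => [|a s] /=; first by right; exact: monic1.
rewrite /lcmp; set l := _ %/ _; have [->|l_neq0] := eqVneq l 0.
  by left; rewrite scaler0.
by right; rewrite monicE lead_coefZ mulVf // lead_coef_eq0.
Qed.

Lemma lcm_seq_eq (s : seq {poly rat}) (R : {poly rat}) : R \is monic ->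
  (forall x, x \in s -> x %| R) -> R %| lcm_seq s -> lcm_seq s = R.
Proof.
move=> R_monic s_dvd_R R_dvd_lcm; have lcm_dvd_R : lcm_seq s %| R by apply: lcm_seq_least.
have [lcm0|lcm_monic] := lcm_seq_monic_or0 s.
  by move: lcm_dvd_R (monic_neq0 R_monic); rewrite lcm0 dvd0p => ->.
by apply/eqP; rewrite -eqp_monic // /eqp lcm_dvd_R R_dvd_lcm.
Qed.

Lemma PhiQ_monic (d : nat) : PhiQ d \is monic.
Proof. exact: monic_map (Cyclotomic_monic d). Qed.

Lemma prod_PhiQ_divisors (N : nat) : (0 < N)%N ->
  \prod_(d <- divisors N) PhiQ d = 'X^N - 1.
Proof.
move=> N_gt0; have := congr1 (map_poly (intr : int -> rat)) (prod_Cyclotomic N_gt0).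
by rewrite rmorph_prod rmorphB rmorph1 rmorphXn /= map_polyX.
Qed.

Lemma prod_divisors_nat (R : comPzSemiRingType) (F : nat -> R) (N : nat) :
  (0 < N)%N ->
  \prod_(d <- divisors N) F d = \prod_(1 <= d < N.+1 | (d %| N)%N) F d.
Proof.
move=> N_gt0; rewrite -[RHS]big_filter; apply/perm_big/uniq_perm.
- exact: divisors_uniq.
- by rewrite filter_uniq // iota_uniq.
move=> d; rewrite mem_filter mem_index_iota -dvdn_divisors //.
have [d_dvd_N|//] := boolP (d %| N)%N.
by rewrite (dvdn_gt0 N_gt0 d_dvd_N) ltnS dvdn_leq.
Qed.

Lemma PhiQ1 : PhiQ 1 = 'X - 1.
Proof.
by rewrite -['X]expr1 -prod_PhiQ_divisors // prod_divisors_nat // big_mkcond big_nat1.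
Qed.

(* [k]_q = (q^k - 1)/(q - 1) = prod of the Phi_d with 1 < d | k. *)
Lemma qint_prod_PhiQ (k : nat) : (0 < k)%N ->
  qint k = \prod_(2 <= d < k.+1 | (d %| k)%N) PhiQ d.
Proof.
move=> k_gt0; have := prod_PhiQ_divisors _ k_gt0.
rewrite prod_divisors_nat // big_ltn_cond // dvd1n PhiQ1 /= subrX1 => Dk.
by apply: (mulfI (monic_neq0 (monicXsubC 1))); rewrite polyC1 Dk.
Qed.

(* Distinct Phi_d, Phi_e both divide the separable polynomial q^(de) - 1,
   hence are coprime. *)
Lemma PhiQ_coprime (d e : nat) : (0 < d)%N -> (0 < e)%N -> d != e ->
  coprimep (PhiQ d) (PhiQ e).
Proof.
move=> d_gt0 e_gt0 d_neq_e; have de_gt0 : (0 < d * e)%N by rewrite muln_gt0 d_gt0.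
apply: (@separable_coprime _ ('X^(d * e) - 1)).
  by apply: separable_Xn_sub_1; rewrite pnatr_eq0 -lt0n.
rewrite -prod_PhiQ_divisors // (bigD1_seq d) ?divisors_uniq //=; last first.
  by rewrite -dvdn_divisors ?dvdn_mulr.
rewrite -big_filter (bigD1_seq e) /= ?filter_uniq ?divisors_uniq //.
  by rewrite mulrA dvdp_mulr.
by rewrite mem_filter eq_sym d_neq_e -dvdn_divisors ?dvdn_mull.
Qed.

Lemma prod_PhiQ_dvd (r : seq nat) (P : pred nat) (p : {poly rat}) :
  uniq r -> (forall d, d \in r -> (0 < d)%N) ->
  (forall d, d \in r -> P d -> PhiQ d %| p) ->
  \prod_(d <- r | P d) PhiQ d %| p.
Proof.
elim: r => [|a r IHr]; first by rewrite big_nil dvd1p.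
move=> /= /andP[a_notin_r r_uniq] r_gt0 r_dvd_p; rewrite big_cons.
have a_gt0 : (0 < a)%N by apply: r_gt0; rewrite inE eqxx.
have rest_dvd_p : \prod_(d <- r | P d) PhiQ d %| p.
  by apply: IHr => // d d_in_r; [apply: r_gt0 | apply: r_dvd_p]; rewrite inE d_in_r orbT.
case Pa: (P a) => //.
have a_coprime_rest : coprimep (PhiQ a) (\prod_(d <- r | P d) PhiQ d).
  rewrite big_seq_cond; elim/big_ind: _ => [|x y cx cy|d /andP[d_in_r _]].
  - exact: coprimep1.
  - by rewrite coprimepMr cx cy.
  apply: PhiQ_coprime => //; first by apply: r_gt0; rewrite inE d_in_r orbT.
  by apply: contraNneq a_notin_r => ->.
by rewrite Gauss_dvdp // rest_dvd_p andbT r_dvd_p ?inE ?eqxx.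
Qed.

Lemma lcm_seq_prod_PhiQ (s : seq {poly rat}) (B : nat) (P : pred nat) :
  (forall x, x \in s -> x %| \prod_(2 <= d < B | P d) PhiQ d) ->
  (forall d, (2 <= d < B)%N -> P d -> exists2 x, x \in s & PhiQ d %| x) ->
  lcm_seq s = \prod_(2 <= d < B | P d) PhiQ d.
Proof.
move=> s_dvd_prod PhiQ_dvd_s; apply: lcm_seq_eq => //.
  by apply: monic_prod => d _; apply: PhiQ_monic.
apply: prod_PhiQ_dvd => [|d|d]; rewrite ?iota_uniq // mem_index_iota.
  by case/andP=> d_ge2 _; apply: leq_trans d_ge2.
move=> d_range Pd; have [x x_in_s PhiQ_dvd_x] := PhiQ_dvd_s d d_range Pd.
exact: dvdp_trans PhiQ_dvd_x (lcm_seq_dvd _ _ x_in_s).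
Qed.

Definition cycprod (B : nat) (e : nat -> nat) : {poly rat} :=
  \prod_(2 <= d < B) PhiQ d ^+ e d.

Lemma cycprod_monic (B : nat) (e : nat -> nat) : cycprod B e \is monic.
Proof. by apply: monic_prod => d _; apply/monic_exp/PhiQ_monic. Qed.

Lemma cycprod_indicator (B : nat) (P : pred nat) :
  \prod_(2 <= d < B | P d) PhiQ d = cycprod B (fun d => P d).
Proof. by rewrite big_mkcond /cycprod; apply: eq_bigr => d _; case: (P d). Qed.

Lemma cycprodD (B : nat) (e f : nat -> nat) :
  cycprod B e * cycprod B f = cycprod B (fun d => e d + f d)%N.
Proof. by rewrite /cycprod -big_split; apply: eq_bigr => d _; rewrite exprD. Qed.

Lemma cycprod_dvd (B : nat) (e f : nat -> nat) :
  (forall d, (2 <= d < B)%N -> (e d <= f d)%N) -> cycprod B e %| cycprod B f.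
Proof.
move=> e_le_f; rewrite /cycprod big_seq [X in _ %| X]big_seq.
elim/big_ind2: _ => [|x1 x2 y1 y2|d]; [exact: dvdpp | exact: dvdp_mul |].
by rewrite mem_index_iota => /e_le_f; apply: dvdp_exp2l.
Qed.

Lemma PhiQ_dvd_cycprod (B : nat) (e : nat -> nat) (d : nat) :
  (2 <= d < B)%N -> (0 < e d)%N -> PhiQ d %| cycprod B e.
Proof.
move=> d_range e_gt0; rewrite /cycprod (bigD1_seq d) ?mem_index_iota ?iota_uniq //=.
by apply: dvdp_mulr; rewrite -{1}(expr1 (PhiQ d)) dvdp_exp2l.
Qed.

Lemma qint_cycprod (k B : nat) : (0 < k)%N -> (k < B)%N ->
  qint k = cycprod B (fun d => d %| k)%N.
Proof.
move=> k_gt0 k_lt_B; rewrite qint_prod_PhiQ // -cycprod_indicator.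
rewrite (@big_cat_nat _ _ _ k.+1 2 B) //= [X in _ * X]big1_seq ?mulr1 //.
move=> d /andP[d_dvd_k]; rewrite mem_index_iota => /andP[k_lt_d _].
by rewrite gtnNdvd in d_dvd_k.
Qed.

Lemma qfact_cycprod (m B : nat) : (m < B)%N ->
  qfact m = cycprod B (fun d => m %/ d)%N.
Proof.
elim: m => [_|m IHm m_lt_B].
  by rewrite /qfact big_geq // /cycprod big1 // => d _; rewrite div0n expr0.
rewrite /qfact big_nat_recr //= -/(qfact m) IHm ?(ltnW m_lt_B) // (@qint_cycprod m.+1 B) //.
rewrite cycprodD /cycprod big_seq [RHS]big_seq; apply: eq_bigr => d.
by rewrite mem_index_iota => /andP[d_ge2 _]; rewrite divnS ?(leq_trans _ d_ge2) // addnC.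
Qed.

Definition carry (d a b : nat) : bool := (d <= a %% d + b %% d)%N.

Lemma qbinom_cycprod (n k : nat) : (k <= n)%N ->
  qbinom n k = cycprod n.+2 (fun d => carry d k (n - k)).
Proof.
move=> k_le_n; have n_k_le_n := leq_subr k n.
rewrite /qbinom k_le_n !(@qfact_cycprod _ n.+2) ?ltnS ?(leq_trans _ (leqnSn n)) //.
have -> : cycprod n.+2 (fun d => n %/ d)%N =
    cycprod n.+2 (fun d => carry d k (n - k)) *
    cycprod n.+2 (fun d => k %/ d + (n - k) %/ d)%N.
  rewrite !cycprodD /cycprod big_seq [RHS]big_seq; apply: eq_bigr => d.
  rewrite mem_index_iota => /andP[d_ge2 _].
  by rewrite -{1}(subnKC k_le_n) divnD ?(leq_trans _ d_ge2) // addnC.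
by rewrite [X in _ %/ X]cycprodD mulpK // monic_neq0 ?cycprod_monic.
Qed.

(* If d | n+1 then adding k and n-k (summing to n = -1 mod d) never carries:
   the last digits sum to d-1. *)
Lemma carry_free_of_dvd (n k d : nat) : (0 < d)%N -> (d %| n.+1)%N ->
  (k <= n)%N -> ~~ carry d k (n - k).
Proof.
rewrite /carry -ltnNge => d_gt0 d_dvd kn; set m := (k %% d + (n - k) %% d).+1.
have m_dvd : (d %| m)%N.
  have Dn : n.+1 = (m + (k %/ d + (n - k) %/ d) * d)%N.
    by have := divn_eq k d; have := divn_eq (n - k) d; rewrite /m; lia.
  by rewrite -(dvdn_addl _ (dvdn_mull (k %/ d + (n - k) %/ d) (dvdnn d))) -Dn.
have m_lt : (m < d + d)%N.
  by have := ltn_pmod k d_gt0; have := ltn_pmod (n - k) d_gt0; rewrite /m; lia.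
rewrite -ltnS -/m ltnS; have [/ltnW //|d_le_m] := ltnP m d.
move: m_dvd; rewrite /dvdn -(subnK d_le_m) modnDr modn_small; lia.
Qed.

(* If 1 < d <= n and d does not divide n+1, then k = d-1 (last digit d-1)
   plus n-k (nonzero last digit) carries. *)
Lemma carry_at_pred (n d : nat) : (2 <= d)%N -> (d <= n)%N -> ~~ (d %| n.+1)%N ->
  carry d d.-1 (n - d.-1).
Proof.
rewrite /carry => d_ge2 dn d_ndvd; rewrite modn_small; last lia.
have : ((n - d.-1) %% d != 0)%N.
  apply: contra d_ndvd => h.
  have -> : n.+1 = (n - d.-1 + d)%N by lia.
  by rewrite dvdn_addl // /dvdn.
move: ((n - d.-1) %% d)%N => r; lia.
Qed.

Lemma lcm_qbinom (n : nat) :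
  lcm_seq [seq qbinom n k | k <- iota 0 n.+1]
    = \prod_(2 <= d < n.+2 | ~~ (d %| n.+1)%N) PhiQ d.
Proof.
apply: lcm_seq_prod_PhiQ => [x|d /andP[d_ge2 d_lt] d_ndvd].
  case/mapP=> k; rewrite mem_iota ltnS => /andP[_ k_le_n] ->.
  rewrite qbinom_cycprod // cycprod_indicator; apply: cycprod_dvd => d /andP[d_ge2 _].
  have [d_dvd|] := boolP (d %| n.+1)%N; last by case: carry.
  by rewrite leqn0 eqb0 carry_free_of_dvd ?(leq_trans _ d_ge2).
have d_le_n : (d <= n)%N.
  by rewrite -ltnS ltn_neqAle -ltnS d_lt andbT; apply: contraNneq d_ndvd => ->.
have pred_d_le_n : (d.-1 <= n)%N by rewrite (leq_trans (leq_pred d)).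
exists (qbinom n d.-1); first by apply: map_f; rewrite mem_iota ltnS.
rewrite qbinom_cycprod //; apply: PhiQ_dvd_cycprod; first by rewrite d_ge2.
by rewrite lt0b carry_at_pred.
Qed.

Lemma lcm_qint (n : nat) :
  lcm_seq [seq qint k | k <- iota 1 n.+1] = \prod_(2 <= d < n.+2) PhiQ d.
Proof.
apply: (lcm_seq_prod_PhiQ _ _ predT) => [x|d /andP[d_ge2 d_lt] _].
  case/mapP=> k; rewrite mem_iota add1n => /andP[k_gt0 k_lt] ->.
  rewrite (@qint_cycprod k n.+2) // cycprod_indicator.
  by apply: cycprod_dvd => d _; case: (d %| k)%N.
have d_gt0 : (0 < d)%N by apply: leq_trans d_ge2.
exists (qint d); first by apply: map_f; rewrite mem_iota d_gt0 add1n.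
by rewrite (@qint_cycprod d n.+2) //; apply: PhiQ_dvd_cycprod; rewrite ?d_ge2 ?dvdnn.
Qed.

Theorem mainTheorem2 (n : nat) (hn : (0 < n)%N) :
  lcm_seq [seq qbinom n k | k <- iota 0 n.+1]
    = \prod_(1 <= d < n.+1 | ~~ (d %| n.+1)%N) PhiQ d
  /\ \prod_(1 <= d < n.+1 | ~~ (d %| n.+1)%N) PhiQ d
    = lcm_seq [seq qint k | k <- iota 1 n.+1] %/ qint n.+1.
Proof.
(* d = 1 and d = n+1 both divide n+1, so the range can be shifted to [2, n+1]. *)
have -> : \prod_(1 <= d < n.+1 | ~~ (d %| n.+1)%N) PhiQ d
    = \prod_(2 <= d < n.+2 | ~~ (d %| n.+1)%N) PhiQ d.
  rewrite big_ltn_cond // dvd1n /= (@big_cat_nat _ _ _ n.+1 2 n.+2) //=.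
  by rewrite [X in _ * X]big_mkcond big_nat1 dvdnn mulr1.
split; first exact: lcm_qbinom.
rewrite lcm_qint [in RHS](bigID (fun d => d %| n.+1)%N) /= -qint_prod_PhiQ //.
by rewrite mulKp // qint_prod_PhiQ // monic_neq0 // monic_prod // => d _; apply: PhiQ_monic.
Qed.
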